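(* Fix a treatment group $d$, a post-treatment target age $a$, and a control group $d'$ with $d'>a\ge d$. Suppose the No Anticipation assumption holds for both genders $g\in\{f,m\}$ and both groups $d$ and $d'$, and suppose $$\frac{\gamma_{\mathrm{PT}}(f,d,d',a)}{APO(f,d,\infty,a)}=\frac{\gamma_{\mathrm{PT}}(m,d,d',a)}{APO(m,d,\infty,a)}.$$ Then the effect of parenthood on the gender earnings ratio satisfies $$\Delta\rho(d,a)=\frac{\mathbb{E}[Y_a\mid G=f,D=d]}{\mathbb{E}[Y_a\mid G=m,D=d]}-\frac{\delta_{\mathrm{APO}}(f,d,d',a)}{\delta_{\mathrm{APO}}(m,d,d',a)}.$$
   Context: Population of individuals with gender $G\in\{f,m\}$ and age at first childbirth $D$ (with $D=\infty$ meaning never). For each age $a$ and each (possibly counterfactual) first-birth age $d'\in\mathbb{N}\cup\{\infty\}$ there is a potential outcome (earnings) $Y_a(d')$; observed earnings satisfy consistency $Y_a=Y_a(D)$. Define $APO(g,d,d',a)=\mathbb{E}[Y_a(d')\mid G=g,D=d]$. Define $\rho(d,d',a)=APO(f,d,d',a)/APO(m,d,d',a)$ and $\Delta\rho(d,a)=\rho(d,d,a)-\rho(d,\infty,a)$. Define $\delta_{\mathrm{APO}}(g,d,d',a)=\mathbb{E}[Y_{d-1}\mid G=g,D=d]+\mathbb{E}[Y_a-Y_{d-1}\mid G=g,D=d']$ and $\gamma_{\mathrm{PT}}(g,d,d',a)=APO(g,d,\infty,a)-APO(g,d,\infty,d-1)-[APO(g,d',\infty,a)-APO(g,d',\infty,d-1)]$.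 No Anticipation for gender $g$ and group $d$: $APO(g,d,d,b)=APO(g,d,\infty,b)$ for every age $b<d$. All denominators appearing are assumed nonzero. *)

(* a probability space (T, P) models the population. *)
From HB Require Import structures.
From mathcomp Require Import all_boot all_order all_algebra.
From mathcomp Require Import all_classical all_reals all_analysis.
Set Implicit Arguments. Unset Strict Implicit. Unset Printing Implicit Defensive.
Import Order.TTheory GRing.Theory Num.Theory.
Local Open Scope classical_set_scope.
Local Open Scope ring_scope.

Inductive gender := female | male.

(* First-birth ages: [Some d] = finite age d, [None] = never (infinity). *)
Notation fb := (option nat) (only parsing).

Section Defs.
Context (R : realType) (dT : measure_display) (T : measurableType dT)
  (P : probability T R) (G : T -> gender) (D : T -> option nat)
  (Y : nat -> option nat -> T -> R). (* Y a d' = potential outcome Y_a(d') *)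

Definition cond_exp (X : T -> R) (E : set T) : R :=
  fine (\int[P]_(x in E) (X x)%:E) / fine (P E).

Definition grp (g : gender) (e : option nat) : set T :=
  [set x | G x = g /\ D x = e].

(* observed earnings, by consistency Y_a = Y_a(D) *)
Definition Yobs (a : nat) : T -> R := fun x => Y a (D x) x.

Definition APO (g : gender) (e e' : option nat) (a : nat) : R :=
  cond_exp (Y a e') (grp g e).

Definition rho (e e' : option nat) (a : nat) : R :=
  APO female e e' a / APO male e e' a.

Definition Delta_rho (d a : nat) : R :=
  rho (Some d) (Some d) a - rho (Some d) None a.

Definition delta_APO (g : gender) (d d' a : nat) : R :=
  cond_exp (Yobs (d - 1)) (grp g (Some d)) +
  cond_exp (fun x => Yobs a x - Yobs (d - 1) x) (grp g (Some d')).

Definition gamma_PT (g : gender) (d d' a : nat) : R :=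
  APO g (Some d) None a - APO g (Some d) None (d - 1)
  - (APO g (Some d') None a - APO g (Some d') None (d - 1)).

Definition NoAnticipation (g : gender) (d : nat) : Prop :=
  forall b : nat, (b < d)%N -> APO g (Some d) (Some d) b = APO g (Some d) None b.

End Defs.

(* By consistency, the observed earnings ratio of group d is rho(d, d, a).
   Under No Anticipation, delta_APO(g, d, d', a) equals APO(g, d, oo, a) minus
   the parallel-trends bias gamma_PT(g, d, d', a); since that bias is the same
   fraction of APO(g, d, oo, a) for both genders, it cancels in the ratio
   delta_APO(f) / delta_APO(m), which is therefore rho(d, oo, a). *)
From HB Require Import structures.
From mathcomp Require Import all_boot all_order all_algebra.
From mathcomp Require Import all_classical all_reals all_analysis.
From mathcomp Require Import ring zify.
Set Implicit Arguments.
Unset Strict Implicit.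
Unset Printing Implicit Defensive.
Import Order.TTheory GRing.Theory Num.Theory.
Local Open Scope classical_set_scope.
Local Open Scope ring_scope.

Lemma ratio_subr_proportional (F : fieldType) (bf bm gf gm : F) :
  bf != 0 -> bm != 0 -> bm - gm != 0 -> gf / bf = gm / bm ->
  (bf - gf) / (bm - gm) = bf / bm.
Proof.
move=> bf0 bm0 bgm0 prop.
have -> : gf = gm / bm * bf by rewrite -prop divfK.
have -> : bf - gm / bm * bf = bf / bm * (bm - gm) by field.
by rewrite mulfK.
Qed.

Section CondExp.
Variables (R : realType) (dT : measure_display) (T : measurableType dT).
Variable P : probability T R.

Lemma eq_cond_exp (X Z : T -> R) (E : set T) :
  {in E, X =1 Z} -> cond_exp P X E = cond_exp P Z E.
Proof.
move=> XZ; rewrite /cond_exp; congr (fine _ / _).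
by apply: eq_integral => x xE; rewrite XZ.
Qed.

Lemma cond_expB (X Z : T -> R) (E : set T) : measurable E ->
  P.-integrable setT (EFin \o X) -> P.-integrable setT (EFin \o Z) ->
  cond_exp P (X \- Z) E = cond_exp P X E - cond_exp P Z E.
Proof.
move=> mE iX iZ.
have iXE := integrableS measurableT mE (subsetT E) iX.
have iZE := integrableS measurableT mE (subsetT E) iZ.
rewrite /cond_exp; under eq_integral do rewrite EFinB.
rewrite integralB_EFin // fineB ?mulrBl //; exact: integrable_fin_num.
Qed.

End CondExp.

Section Potential.
Variables (R : realType) (dT : measure_display) (T : measurableType dT).
Variables (P : probability T R) (G : T -> gender) (D : T -> option nat).
Variable Y : nat -> option nat -> T -> R.

Lemma cond_exp_Yobs_grp (g : gender) (e : option nat) (b : nat) :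
  cond_exp P (Yobs D Y b) (grp G D g e) = APO P G D Y g e e b.
Proof. by apply: eq_cond_exp => x; rewrite inE /Yobs => -[_ ->]. Qed.

Hypothesis Y_integrable :
  forall (b : nat) (e : option nat), P.-integrable setT (EFin \o Y b e).
Hypothesis grp_measurable :
  forall (g : gender) (e : option nat), measurable (grp G D g e).

Lemma delta_APO_NoAnticipation (g : gender) (d d' a : nat) :
  (0 < d)%N -> (a < d')%N -> (d <= d')%N ->
  NoAnticipation P G D Y g d -> NoAnticipation P G D Y g d' ->
  delta_APO P G D Y g d d' a
    = APO P G D Y g (Some d) None a - gamma_PT P G D Y g d d' a.
Proof.
move=> d_gt0 ad' dd' NAd NAd'.
have trend : cond_exp P (fun x => Yobs D Y a x - Yobs D Y (d - 1) x)
    (grp G D g (Some d')) = APO P G D Y g (Some d') (Some d') a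
                            - APO P G D Y g (Some d') (Some d') (d - 1).
  rewrite (@eq_cond_exp _ _ _ _ _ (Y a (Some d') \- Y (d - 1) (Some d'))).
    exact: cond_expB.
  by move=> x; rewrite inE /Yobs => -[_ ->].
rewrite /delta_APO cond_exp_Yobs_grp trend NAd ?NAd'; try lia.
rewrite /gamma_PT; ring.
Qed.

End Potential.

Theorem theorem2 (R : realType) (dT : measure_display) (T : measurableType dT)
  (P : probability T R) (G : T -> gender) (D : T -> option nat)
  (Y : nat -> option nat -> T -> R) (d d' a : nat) :
  (* standing regularity: potential outcomes integrable, groups are events *)
  (forall (b : nat) (e : option nat), P.-integrable setT (fun x => (Y b e x)%:E)) ->
  (forall (g : gender) (e : option nat), measurable (grp G D g e)) ->
  (forall g : gender, P (grp G D g (Some d)) != 0%E) ->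
  (forall g : gender, P (grp G D g (Some d')) != 0%E) ->
  (* d - 1 is an age *)
  (0 < d)%N ->
  (d <= a)%N -> (a < d')%N ->
  (forall g : gender, NoAnticipation P G D Y g d) ->
  (forall g : gender, NoAnticipation P G D Y g d') ->
  (* nonzero denominators *)
  APO P G D Y male (Some d) (Some d) a != 0 ->
  (forall g : gender, APO P G D Y g (Some d) None a != 0) ->
  cond_exp P (Yobs D Y a) (grp G D male (Some d)) != 0 ->
  delta_APO P G D Y male d d' a != 0 ->
  gamma_PT P G D Y female d d' a / APO P G D Y female (Some d) None a
    = gamma_PT P G D Y male d d' a / APO P G D Y male (Some d) None a ->
  Delta_rho P G D Y d a =
    cond_exp P (Yobs D Y a) (grp G D female (Some d))
      / cond_exp P (Yobs D Y a) (grp G D male (Some d))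
    - delta_APO P G D Y female d d' a / delta_APO P G D Y male d d' a.
Proof.
move=> Yint grpm _ _ d_gt0 da ad' NAd NAd' _ APO0 _ delta0 prop.
have dd' : (d <= d')%N by lia.
have delta (g : gender) := delta_APO_NoAnticipation Yint grpm d_gt0 ad' dd' (NAd g) (NAd' g).
rewrite !cond_exp_Yobs_grp /Delta_rho /rho.
rewrite delta in delta0; rewrite !delta.
by rewrite (ratio_subr_proportional (APO0 female) (APO0 male) delta0 prop).
Qed.
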